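(* For $K>\hat K^*:=\frac{b\sigma_2}{b-\mu_0}$ let $R(K)$ denote the $R$-component of the unique equilibrium $G_4(K)=(S^*,0,I_2^*,0,R^* )$ of the system below with positive $S^*,I_2^*,R^*$ (so $R(K)$ is the unique root in $(0,S^{**}-\sigma_2)$ of $\big(S^{**}-\sigma_2-R+\frac{K}{b}(\mu_0-\mu_4')\big)R+\frac{\rho_2}{\alpha_2}(S^{**}-\sigma_2-R)=0$). Then $K\mapsto R(K)$ is differentiable on $(\hat K^*,\infty)$ and $$0<K\frac{dR}{dK}<\sigma_2+R(K).$$
   Context: Consider, for $t\ge0$, the system $S'=\big(b(1-\tfrac{N}{K})-\alpha_1I_1-\alpha_2I_2-(\beta_1+\beta_2+\alpha_3)I_{12}-\mu_0\big)S$, $I_1'=\big(b(1-\tfrac{N}{K})+\alpha_1S-\eta_1I_{12}-\gamma_1I_2-\mu_1\big)I_1+\beta_1SI_{12}$, $I_2'=\big(b(1-\tfrac{N}{K})+\alpha_2S-\eta_2I_{12}-\gamma_2I_1-\mu_2\big)I_2+\beta_2SI_{12}$, $I_{12}'=\big(b(1-\tfrac{N}{K})+\alpha_3S+\eta_1I_1+\eta_2I_2-\mu_3\big)I_{12}+(\gamma_1+\gamma_2)I_1I_2$, $R'=\big(b(1-\tfrac{N}{K})-\mu_4'\big)R+\rho_1I_1+\rho_2I_2+\rho_3I_{12}$, where $N=S+I_1+I_2+I_{12}+R$. All parameters $b,K,\alpha_i,\beta_i,\gamma_i,\eta_i,\rho_i,\mu_0,\mu_i'$ are positive and $\mu_i=\rho_i+\mu_i'$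 for $i=1,2,3$; $K$ is regarded as a varying parameter, the others fixed. Standing assumptions: $b>\mu_0$, $b>\mu_i$ ($i=1,2,3$), $b>\mu_4'$, and $\mu_0<\mu_4'<\mu_j'$ for $j=1,2,3$. Set $\sigma_k=(\mu_k-\mu_0)/\alpha_k$ ($k=1,2,3$), assumed to satisfy $\sigma_1<\sigma_2<\sigma_3$, and $S^{**}=\frac{K}{b}(b-\mu_0)$. *)

From Stdlib Require Export Reals Lra.
Open Scope R_scope.

(* mu_k = rho_k + mu_k' ;  sigma_k = (mu_k - mu0)/alpha_k *)
Definition sigmak (rho mu' mu0 alpha : R) : R := ((rho + mu') - mu0) / alpha.

Definition Sss (K b mu0 : R) : R := K / b * (b - mu0).

Definition Khat (b mu0 s2 : R) : R := b * s2 / (b - mu0).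

Definition G4_R_eq (K b mu0 mu4' rho2 alpha2 s2 x : R) : Prop :=
  (Sss K b mu0 - s2 - x + K / b * (mu0 - mu4')) * x
    + rho2 / alpha2 * (Sss K b mu0 - s2 - x) = 0.

From Stdlib Require Import Reals Lra Psatz.
From Coquelicot Require Import Coquelicot.
Open Scope R_scope.

(* With [S** = a K], [K/b (mu0 - mu4') = c K] and [r = rho2/alpha2], the
   equation for [R(K)] is the quadratic [x^2 - B(K) x - r (a K - s) = 0] with
   [B(K) = (a + c) K - s - r].  Its constant term is negative for [K > s/a],
   so it has exactly one positive root, [(B + sqrt D)/2], which is smooth in
   [K].  Implicit differentiation gives [R' = ((a + c) R + r a) / (2 R - B)],
   and the two bounds on [K R'] are polynomial inequalities that follow from
   the equation itself. *)

Section PositiveRoot.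

Variables a c r s : R.
Hypotheses (Ha : 0 < a) (Hr : 0 < r) (Hs : 0 < s).

Definition root_eq (K x : R) : Prop :=
  (a * K - s - x + c * K) * x + r * (a * K - s - x) = 0.

Definition lin_coef (K : R) : R := (a + c) * K - s - r.

Definition disc (K : R) : R := lin_coef K * lin_coef K + 4 * r * (a * K - s).

Definition pos_root (K : R) : R := (lin_coef K + sqrt (disc K)) / 2.

Lemma disc_pos (K : R) : s < a * K -> 0 < disc K.
Proof. intros HK. unfold disc. nra. Qed.

Lemma sqrt_disc_eq (K : R) : sqrt (disc K) = 2 * pos_root K - lin_coef K.
Proof. unfold pos_root. field. Qed.

Lemma root_eq_pos_root (K x : R) :
  s < a * K -> 0 < x -> root_eq K x -> x = pos_root K.
Proof.
  intros HK Hx Heq.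
  pose proof (disc_pos K HK) as HD.
  pose proof (sqrt_sqrt (disc K) (Rlt_le _ _ HD)) as Hsq.
  pose proof (sqrt_lt_R0 _ HD) as Hsq0.
  (* the two roots are [(B -+ sqrt D)/2]; the smaller one is negative *)
  assert (Hfactor : (2 * x - lin_coef K - sqrt (disc K))
                    * (2 * x - lin_coef K + sqrt (disc K)) = 0).
  { unfold root_eq, disc, lin_coef in *. nra. }
  apply Rmult_integral in Hfactor as [Hplus | Hminus].
  - unfold pos_root. lra.
  - exfalso. unfold disc in *. nra.
Qed.

Lemma is_derive_pos_root (K : R) : s < a * K ->
  is_derive pos_root K (((a + c) * pos_root K + r * a) / sqrt (disc K)).
Proof.
  intros HK.
  pose proof (disc_pos K HK) as HD.
  pose proof (sqrt_lt_R0 _ HD) as Hsq0.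
  unfold pos_root, disc, lin_coef in *. auto_derive.
  - exact HD.
  - unfold Rminus in *. field. lra.
Qed.

Lemma root_eq_slope_bounds (K x : R) :
  0 < x < a * K - s -> root_eq K x ->
  0 < K * (((a + c) * x + r * a) / (2 * x - lin_coef K)) < s + x.
Proof.
  intros [Hx0 Hx1] Heq.
  set (E := a * K - s - x + c * K).
  assert (HE : E < 0).
  { unfold root_eq in Heq. fold E in Heq. nra. }
  (* both sides of [K R' < s + R], cleared of the denominator, factor through
     [s + x] once [r a K] is eliminated with the equation *)
  assert (Hnum : K * ((a + c) * x + r * a) = (s + x) * (x + r)).
  { unfold root_eq in Heq. fold E in Heq. unfold E in *. nra. }
  assert (Hden : 2 * x - lin_coef K = x + r - E).
  { unfold lin_coef, E. ring. }
  rewrite Rmult_div_assoc, Hnum, Hden.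
  split.
  - apply Rdiv_lt_0_compat; nra.
  - apply Rlt_div_l; nra.
Qed.

Theorem pos_root_derivative_bounds (RK : R -> R)
  (HRK : forall K, s / a < K -> 0 < RK K < a * K - s /\ root_eq K (RK K)) :
  forall K, s / a < K -> exists dR, derivable_pt_lim RK K dR /\
    0 < K * dR < s + RK K.
Proof.
  assert (Hthr : forall K, s / a < K -> s < a * K).
  { intros K HK. apply Rlt_div_l in HK; lra. }
  assert (HRK_root : forall K, s / a < K -> RK K = pos_root K).
  { intros K HK. destruct (HRK K HK) as [[Hx0 _] Heq].
    exact (root_eq_pos_root K (RK K) (Hthr K HK) Hx0 Heq). }
  intros K HK.
  destruct (HRK K HK) as [Hx Heq].
  exists (((a + c) * RK K + r * a) / sqrt (disc K)).
  split.
  - apply is_derive_Reals.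
    apply (is_derive_ext_loc pos_root).
    + apply (filter_imp (fun t => s / a < t)).
      * intros t Ht. symmetry. exact (HRK_root t Ht).
      * apply open_gt. exact HK.
    + rewrite (HRK_root K HK). exact (is_derive_pos_root K (Hthr K HK)).
  - rewrite sqrt_disc_eq, <- (HRK_root K HK).
    exact (root_eq_slope_bounds K (RK K) Hx Heq).
Qed.

End PositiveRoot.

Theorem proposition5
  (b alpha1 alpha2 alpha3 beta1 beta2 gamma1 gamma2 eta1 eta2
   rho1 rho2 rho3 mu0 mu1' mu2' mu3' mu4' : R)
  (Hpos : 0 < b /\ 0 < alpha1 /\ 0 < alpha2 /\ 0 < alpha3 /\ 0 < beta1 /\
          0 < beta2 /\ 0 < gamma1 /\ 0 < gamma2 /\ 0 < eta1 /\ 0 < eta2 /\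
          0 < rho1 /\ 0 < rho2 /\ 0 < rho3 /\ 0 < mu0 /\ 0 < mu1' /\
          0 < mu2' /\ 0 < mu3' /\ 0 < mu4')
  (Hb0 : mu0 < b)
  (Hb1 : rho1 + mu1' < b) (Hb2 : rho2 + mu2' < b) (Hb3 : rho3 + mu3' < b)
  (Hb4 : mu4' < b)
  (Hm0 : mu0 < mu4')
  (Hm1 : mu4' < mu1') (Hm2 : mu4' < mu2') (Hm3 : mu4' < mu3')
  (Hs12 : sigmak rho1 mu1' mu0 alpha1 < sigmak rho2 mu2' mu0 alpha2)
  (Hs23 : sigmak rho2 mu2' mu0 alpha2 < sigmak rho3 mu3' mu0 alpha3)
  (RK : R -> R)
  (HRK : forall K, Khat b mu0 (sigmak rho2 mu2' mu0 alpha2) < K ->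
     0 < RK K < Sss K b mu0 - sigmak rho2 mu2' mu0 alpha2 /\
     G4_R_eq K b mu0 mu4' rho2 alpha2 (sigmak rho2 mu2' mu0 alpha2) (RK K)) :
  forall K, Khat b mu0 (sigmak rho2 mu2' mu0 alpha2) < K ->
    exists dR, derivable_pt_lim RK K dR /\
      0 < K * dR < sigmak rho2 mu2' mu0 alpha2 + RK K.
Proof.
  destruct Hpos as (Hb & _ & Ha2 & _ & _ & _ & _ & _ & _ & _ & _ & Hr2 & _).
  set (s := sigmak rho2 mu2' mu0 alpha2) in *.
  set (a := (b - mu0) / b).
  assert (Hs : 0 < s) by (unfold s, sigmak; apply Rdiv_lt_0_compat; lra).
  assert (HKhat : Khat b mu0 s = s / a) by (unfold Khat, a; field; lra).
  rewrite HKhat in HRK |- *.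
  apply (pos_root_derivative_bounds a ((mu0 - mu4') / b) (rho2 / alpha2) s).
  - unfold a. apply Rdiv_lt_0_compat; lra.
  - apply Rdiv_lt_0_compat; lra.
  - exact Hs.
  - intros K HK. destruct (HRK K HK) as [Hbox Heq].
    assert (HS : Sss K b mu0 = a * K) by (unfold Sss, a; field; lra).
    assert (Hc : K / b * (mu0 - mu4') = (mu0 - mu4') / b * K) by (field; lra).
    unfold G4_R_eq, root_eq in *. rewrite HS, Hc in *. split; assumption.
Qed.
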